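(* Let $\mathcal F=\{D_4,P\}$, where $D_4\in\{0,1\}^{4\times4}$ has support $\{(1,1),(2,2),(3,3),(4,4)\}$ and $P\in\{0,1\}^{4\times3}$ has support $\{(1,2),(2,1),(3,2),(4,3)\}$. Then the class $\mathrm{Av}(\mathcal F)$ is row-bounded but not column-bounded.
   Context: All matrices are binary; rows numbered top to bottom, columns left to right; $(i,j)$ is the entry in row $i$, column $j$; $(a,b]=\{a+1,\dots,b\}$. A pattern $P\in\{0,1\}^{k\times\ell}$ is an interval minor of $M\in\{0,1\}^{m\times n}$ if there are integers $0=r_0<\dots<r_k=m$ and $0=c_0<\dots<c_\ell=n$ such that for each 1-entry $(i,j)$ of $P$ the submatrix of $M$ on rows $(r_{i-1},r_i]$ and columns $(c_{j-1},c_j]$ contains a 1-entry; otherwise $M$ avoids $P$. For a set $\mathcal F$ of patterns, $\mathrm{Av}(\mathcal F)$ is the set of binary matrices avoiding every pattern in $\mathcal F$. $M\in\mathcal C$ is critical for $\mathcal C$ if changing any single 0-entry of $M$ into a 1-entry yields a matrix not in $\mathcal C$. A 0-run is a maximal set of consecutive 0-entries within a single row or a single column; the complexity of a line is the number of 0-runs in it. $\mathcal C$ is row-bounded (column-bounded) if the supremum over all matrices critical for $\mathcal C$ of the maximum complexity of a row (column) is finite. *)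

(* binary matrices as 'M[bool]_(m, n); rows/columns 0-indexed. *)
From Stdlib Require List.
From mathcomp Require Import all_boot ssralg matrix.
Set Implicit Arguments. Unset Strict Implicit. Unset Printing Implicit Defensive.

Record pattern := Pattern { pk : nat; pl : nat; pmx : 'M[bool]_(pk, pl) }.

(* P (k x l) is an interval minor of M (m x n): there are
   0 = r_0 < ... < r_k = m and 0 = c_0 < ... < c_l = n such that for every
   1-entry (i,j) of P (0-indexed), the block of rows [r_i, r_{i+1}) and
   columns [c_j, c_{j+1}) (0-indexed, i.e. (r_{i},r_{i+1}] 1-indexed)
   contains a 1-entry of M. *)
Definition interval_minor (k l m n : nat) (P : 'M[bool]_(k, l)) (M : 'M[bool]_(m, n)) : Prop :=
  exists (r c : nat -> nat),
    [/\ r 0 = 0, r k = m & (forall i, i < k -> r i < r i.+1)] /\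
    [/\ c 0 = 0, c l = n & (forall j, j < l -> c j < c j.+1)] /\
    (forall (i : 'I_k) (j : 'I_l), P i j ->
          exists (a : 'I_m) (b : 'I_n),
            [&& r i <= a, a < r i.+1, c j <= b, b < c j.+1 & M a b]).

Definition avoids (k l m n : nat) (P : 'M[bool]_(k, l)) (M : 'M[bool]_(m, n)) : Prop :=
  ~ interval_minor P M.

Definition mclass := forall m n : nat, 'M[bool]_(m, n) -> Prop.

Definition Av (F : seq pattern) : mclass :=
  fun m n M => forall Q, List.In Q F -> avoids (pmx Q) M.

Definition set1 m n (M : 'M[bool]_(m, n)) (i : 'I_m) (j : 'I_n) : 'M[bool]_(m, n) :=
  \matrix_(a < m, b < n) (M a b || ((a == i) && (b == j))).

Definition critical (C : mclass) m n (M : 'M[bool]_(m, n)) : Prop :=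
  C m n M /\ forall (i : 'I_m) (j : 'I_n), M i j = false -> ~ C m n (set1 M i j).

(* number of maximal runs of consecutive 0s (false) in a line;
   prev is the previous entry (true = "not a 0" at the start). *)
Fixpoint zero_runs_from (prev : bool) (s : seq bool) : nat :=
  match s with
  | [::] => 0
  | x :: s' => (prev && ~~ x) + zero_runs_from x s'
  end.
Definition zero_runs (s : seq bool) : nat := zero_runs_from true s.

Definition row_complexity m n (M : 'M[bool]_(m, n)) (i : 'I_m) : nat :=
  zero_runs [seq M i j | j <- enum 'I_n].
Definition col_complexity m n (M : 'M[bool]_(m, n)) (j : 'I_n) : nat :=
  zero_runs [seq M i j | i <- enum 'I_m].

Definition row_bounded (C : mclass) : Prop :=
  exists B : nat, forall m n (M : 'M[bool]_(m, n)), critical C M ->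
    forall i : 'I_m, row_complexity M i <= B.
Definition column_bounded (C : mclass) : Prop :=
  exists B : nat, forall m n (M : 'M[bool]_(m, n)), critical C M ->
    forall j : 'I_n, col_complexity M j <= B.

Definition D4 : 'M[bool]_(4, 4) := \matrix_(i < 4, j < 4) (nat_of_ord i == nat_of_ord j).
Definition P43 : 'M[bool]_(4, 3) :=
  \matrix_(i < 4, j < 3) ((nat_of_ord i, nat_of_ord j) \in [:: (0, 1); (1, 0); (2, 1); (3, 2)]).

Definition F_D4_P : seq pattern := [:: Pattern D4; Pattern P43].

From Pilot Require Import Defs.
From mathcomp Require Import all_boot ssralg matrix.
From mathcomp Require Import zify.
From Stdlib Require Import Classical FunctionalExtensionality.
Set Implicit Arguments. Unset Strict Implicit. Unset Printing Implicit Defensive.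

(* In a critical matrix, turning a 0-entry (i, z) that lies
   between two 1-entries (i, a) and (i, b) of its row into a 1 creates an
   occurrence of D4 or P43 through (i, z).  Since the matrix itself avoids both
   patterns, the occurrence cannot be moved onto (i, a) or (i, b), and this
   leaves only four possible roles for (i, z).  Two such gaps of a row in the
   same role, separated by a 1, already give an occurrence in the matrix, and
   one role requires that no 1 lies left of a.  Hence a row has at most four
   gaps, so at most six 0-runs.

   The (2n+1) x (2n+6) matrix whose 1-entries lie in the
   even rows, on the first column and on two anti-diagonals, avoids both
   patterns.  Any critical matrix above it keeps the 1s in the even rows of the
   first column and has 0s in its odd rows 2t+1 < 2n-2, since a 1 there would
   complete an occurrence of P43 with three 1-entries on the anti-diagonals; so
   this column has at least n-1 0-runs. *)

Section Entries.
Variables (m n : nat) (M : 'M[bool]_(m, n)).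

Definition entry (a b : nat) : bool :=
  [exists i : 'I_m, exists j : 'I_n, [&& i == a :> nat, j == b :> nat & M i j]].

Lemma entryP a b :
  reflect (exists (i : 'I_m) (j : 'I_n), [/\ i = a :> nat, j = b :> nat & M i j])
          (entry a b).
Proof.
apply: (iffP existsP) => [[i /existsP [j /and3P [/eqP ? /eqP ? ?]]]|[i [j [? ? ?]]]].
  by exists i, j.
by exists i; apply/existsP; exists j; subst; rewrite !eqxx.
Qed.

Lemma entryE (i : 'I_m) (j : 'I_n) : entry i j = M i j.
Proof.
by apply/entryP/idP => [[i' [j' [/val_inj -> /val_inj ->]]]|] // Mij; exists i, j.
Qed.

Lemma entry_bound a b : entry a b -> a < m /\ b < n.
Proof. by case/entryP=> i [j [<- <- _]]. Qed.

End Entries.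

Lemma entry_mono m n (M M' : 'M[bool]_(m, n)) :
  (forall i j, M i j -> M' i j) -> forall a b, entry M a b -> entry M' a b.
Proof. by move=> MM' a b /entryP [i [j [<- <- /MM' Mij]]]; rewrite entryE. Qed.

Definition add_entry (f : nat -> nat -> bool) (i z : nat) : nat -> nat -> bool :=
  fun a b => f a b || (a == i) && (b == z).

Lemma entry_set1 m n (M : 'M[bool]_(m, n)) (i : 'I_m) (j : 'I_n) :
  entry (Defs.set1 M i j) = add_entry (entry M) i j.
Proof.
apply: functional_extensionality => a; apply: functional_extensionality => b.
apply/idP/idP => [/entryP [i' [j' [<- <-]]]|/orP [/entryP [i' [j' [<- <- Mij]]]|]].
- rewrite mxE /add_entry entryE => /orP [-> //|/andP [/eqP -> /eqP ->]].
  by rewrite !eqxx orbT.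
- by rewrite entryE mxE Mij.
- by case/andP=> /eqP -> /eqP ->; rewrite entryE mxE !eqxx orbT.
Qed.

Lemma nth_map_enum_ord T n (g : 'I_n -> T) (h : nat -> T) d b :
  (forall j : 'I_n, h j = g j) ->
  nth d [seq g j | j <- enum 'I_n] b = if b < n then h b else d.
Proof.
move=> hg; case: ltnP => [lt_bn|le_nb].
  by rewrite (nth_map (Ordinal lt_bn)) ?size_enum_ord // -hg nth_enum_ord.
by rewrite nth_default // size_map size_enum_ord.
Qed.

Definition separating (c : nat -> nat) (l n : nat) : Prop :=
  [/\ c 0 = 0, c l = n & forall j, j < l -> c j < c j.+1].

Lemma separating_le c l n j j' : separating c l n -> j <= j' <= l -> c j <= c j'.
Proof.
case=> _ _ c_incr /andP [le_jj' le_j'l].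
apply: (@homo_leq_in _ [pred p | p <= l] c (fun a b => a <= b)) => //.
- exact: leq_trans.
- by move=> p q; rewrite !inE => ? ? r ?; rewrite inE; lia.
- by move=> p _; rewrite inE => lt_pl; apply/ltnW/c_incr.
- by rewrite inE; lia.
Qed.

Lemma separating_block_lt c l n p q x y :
  separating c l n -> p < q <= l -> x < c p.+1 -> c q <= y -> x < y.
Proof.
move=> sep /andP [lt_pq le_ql] lt_x le_y.
by rewrite (leq_trans lt_x) // (leq_trans _ le_y) // (separating_le sep) ?lt_pq.
Qed.

Lemma separating_exists N l n (tau : 'I_N -> 'I_l) (x : 'I_N -> nat) :
  0 < l -> (forall j, exists i, tau i = j) -> (forall i, x i < n) ->
  (forall i i', tau i < tau i' -> x i < x i') ->
  exists c, separating c l n /\ forall i, c (tau i) <= x i < c (tau i).+1.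
Proof.
move=> l_gt0 tau_onto x_lt x_mono.
(* Cut just after the largest point of the earlier blocks. *)
pose c j := if j < l then \max_(i | tau i < j) (x i).+1 else n.
have blocks i : c (tau i) <= x i < c (tau i).+1.
  rewrite /c ltn_ord; apply/andP; split.
    by apply/bigmax_leqP => i' /x_mono.
  case: ifP => _; last exact: x_lt.
  by apply: (leq_bigmax_cond i).
exists c; split => //; split.
- by rewrite /c l_gt0 big_pred0.
- by rewrite /c ltnn.
- move=> j lt_jl; have [i tau_i] := tau_onto (Ordinal lt_jl).
  have /andP [le_ci lt_ic] := blocks i.
  by rewrite tau_i /= in le_ci lt_ic; apply: leq_ltn_trans le_ci lt_ic.
Qed.

Definition fun_pattern k l (sigma : 'I_k -> 'I_l) : 'M[bool]_(k, l) :=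
  \matrix_(i, j) (sigma i == j).

Lemma interval_minor_fun_patternP k l (sigma : 'I_k -> 'I_l) m n (M : 'M[bool]_(m, n)) :
  0 < k -> (forall j, exists i, sigma i = j) ->
  interval_minor (fun_pattern sigma) M <->
  exists a b : 'I_k -> nat,
    [/\ forall i i' : 'I_k, i < i' -> a i < a i',
        forall i i', sigma i < sigma i' -> b i < b i'
      & forall i, entry M (a i) (b i)].
Proof.
move=> k_gt0 sigma_onto; split.
- case=> r [c [rsep [csep blocks]]].
  have pick (i : 'I_k) : exists ab : nat * nat,
      [&& r i <= ab.1 < r i.+1, c (sigma i) <= ab.2 < c (sigma i).+1 & entry M ab.1 ab.2].
    have := blocks i (sigma i); rewrite mxE eqxx => /(_ isT) [a [b /and5P [? ? ? ? Mab]]].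
    exists (nat_of_ord a, nat_of_ord b).
    by rewrite /= entryE Mab andbT; apply/andP; split; apply/andP.
  have [ab ab_blocks] := fin_all_exists pick.
  exists (fun i => (ab i).1), (fun i => (ab i).2); split => [i i' lt_ii'|i i' lt_ii'|i].
  + have /and3P [/andP [_ lt_a] _ _] := ab_blocks i.
    have /and3P [/andP [le_a' _] _ _] := ab_blocks i'.
    by apply: (separating_block_lt rsep _ lt_a le_a'); rewrite lt_ii' ltnW.
  + have /and3P [_ /andP [_ lt_b] _] := ab_blocks i.
    have /and3P [_ /andP [le_b' _] _] := ab_blocks i'.
    by apply: (separating_block_lt csep _ lt_b le_b'); rewrite lt_ii' ltnW.
  + by case/and3P: (ab_blocks i).
- case=> a [b [a_mono b_mono Mab]].
  have l_gt0 : 0 < l by case: (sigma (Ordinal k_gt0)) => j /(leq_ltn_trans (leq0n j)).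
  have [r [rsep rblocks]] := @separating_exists _ _ m id a k_gt0
    (fun i => ex_intro _ i erefl) (fun i => (entry_bound (Mab i)).1) a_mono.
  have [c [csep cblocks]] := separating_exists l_gt0 sigma_onto
    (fun i => (entry_bound (Mab i)).2) b_mono.
  exists r, c; split => //; split => // i j; rewrite mxE => /eqP <-.
  have /entryP [a' [b' [ea eb Mab']]] := Mab i.
  exists a', b'; rewrite ea eb Mab' andbT andbA.
  by apply/andP; split; [exact: rblocks|exact: cblocks].
Qed.

Definition has_D4 (f : nat -> nat -> bool) : Prop :=
  exists a0 a1 a2 a3 b0 b1 b2 b3,
    [/\ a0 < a1, a1 < a2, a2 < a3, b0 < b1 & b1 < b2 /\ b2 < b3] /\
    [/\ f a0 b0, f a1 b1, f a2 b2 & f a3 b3].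

Definition has_P43 (f : nat -> nat -> bool) : Prop :=
  exists a1 a2 a3 a4 c1 c2 c3 c4,
    [/\ a1 < a2, a2 < a3, a3 < a4, c2 < c1 & c2 < c3 /\ c1 < c4 /\ c3 < c4] /\
    [/\ f a1 c1, f a2 c2, f a3 c3 & f a4 c4].

Definition P43_columns (i : 'I_4) : 'I_3 := inord (nth 0 [:: 1; 0; 1; 2] i).

Lemma D4_fun_pattern : D4 = fun_pattern id.
Proof. by apply/matrixP => i j; rewrite !mxE. Qed.

Lemma P43_fun_pattern : P43 = fun_pattern P43_columns.
Proof.
apply/matrixP => i j; rewrite !mxE.
case: i => [[|[|[|[|i]]]] ?] //; case: j => [[|[|[|j]]] ?] //.
all: by rewrite /P43_columns -val_eqE /= inordK.
Qed.

Lemma P43_columns_onto j : exists i, P43_columns i = j.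
Proof.
case: j => [[|[|[|j]]] ?] //.
- by exists (inord 1); apply/val_inj; rewrite /P43_columns /= !inordK.
- by exists (inord 0); apply/val_inj; rewrite /P43_columns /= !inordK.
- by exists (inord 3); apply/val_inj; rewrite /P43_columns /= !inordK.
Qed.

Lemma interval_minor_D4 m n (M : 'M[bool]_(m, n)) :
  interval_minor D4 M <-> has_D4 (entry M).
Proof.
rewrite D4_fun_pattern interval_minor_fun_patternP //; last by move=> j; exists j.
split => [[a [b [a_mono b_mono Mab]]]|[a0 [a1 [a2 [a3 [b0 [b1 [b2 [b3 [lt Mab]]]]]]]]]].
  pose o t : 'I_4 := inord t.
  exists (a (o 0)), (a (o 1)), (a (o 2)), (a (o 3)), (b (o 0)), (b (o 1)), (b (o 2)), (b (o 3)).
  by split; split; rewrite ?a_mono ?b_mono ?Mab // /o !inordK.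
case: lt Mab => ? ? ? ? [? ?] [? ? ? ?].
exists (nth 0 [:: a0; a1; a2; a3] \o val), (nth 0 [:: b0; b1; b2; b3] \o val).
split=> [i i'|i i'|[[|[|[|[|?]]]] ?]] //.
all: by case: i i' => [[|[|[|[|?]]]] ?] [[|[|[|[|?]]]] ?] //=; lia.
Qed.

Lemma interval_minor_P43 m n (M : 'M[bool]_(m, n)) :
  interval_minor P43 M <-> has_P43 (entry M).
Proof.
rewrite P43_fun_pattern interval_minor_fun_patternP //; last exact: P43_columns_onto.
split => [[a [b [a_mono b_mono Mab]]]|[a1 [a2 [a3 [a4 [c1 [c2 [c3 [c4 [lt Mab]]]]]]]]]].
  pose o t : 'I_4 := inord t.
  exists (a (o 0)), (a (o 1)), (a (o 2)), (a (o 3)), (b (o 0)), (b (o 1)), (b (o 2)), (b (o 3)).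
  by split; split; rewrite ?a_mono ?b_mono ?Mab // /o /P43_columns !inordK.
case: lt Mab => ? ? ? ? [? [? ?]] [? ? ? ?].
exists (nth 0 [:: a1; a2; a3; a4] \o val), (nth 0 [:: c1; c2; c3; c4] \o val).
split=> [i i'|i i'|[[|[|[|[|?]]]] ?]] //.
all: case: i i' => [[|[|[|[|?]]]] ?] [[|[|[|[|?]]]] ?] //=.
all: by rewrite /P43_columns ?inordK //=; lia.
Qed.

Lemma AvP m n (M : 'M[bool]_(m, n)) :
  Av F_D4_P M <-> ~ has_D4 (entry M) /\ ~ has_P43 (entry M).
Proof.
split => [AvM|[noD4 noP43] Q [<-|[<-|[]]]] /=.
- split; first by move/interval_minor_D4; apply: (AvM (Pattern D4)); left.
  by move/interval_minor_P43; apply: (AvM (Pattern P43)); right; left.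
- by move/interval_minor_D4.
- by move/interval_minor_P43.
Qed.

Lemma zero_runs_from_alternating prev s n :
  (forall t, t < n -> nth false s (2 * t) && ~~ nth true s (2 * t).+1) ->
  n <= zero_runs_from prev s.
Proof.
elim: n prev s => [//|n IH] prev s alt; have /andP [s0 s1] := alt 0 erefl.
case: s s0 s1 alt => [//|x [|y s]] //= -> /negbTE -> alt.
rewrite andbF add0n add1n ltnS; apply: IH => t lt_tn.
by have := alt t.+1; rewrite mulnSr addn2 /=; apply.
Qed.

(* [~~ nth true s k] says that [s] has a 0 at position [k < size s]. *)
Definition separated_zeros (s : seq bool) (n : nat) (z o : nat -> nat) : Prop :=
  [/\ forall k, k <= n -> ~~ nth true s (z k),
      forall k, k < n -> nth false s (o k)
    & forall k, k < n -> z k < o k < z k.+1].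

Lemma separated_zeros_cons x s n z o :
  separated_zeros s n z o -> separated_zeros (x :: s) n (succn \o z) (succn \o o).
Proof. by case=> zs os zos; split => k /=; [apply: zs|apply: os|apply: zos]. Qed.

Lemma separated_zeros_cons_zero s n z o p :
  separated_zeros s n z o -> p < z 0 -> nth false s p ->
  separated_zeros (false :: s) n.+1 (fun k => if k is k'.+1 then (z k').+1 else 0)
                                    (fun k => if k is k'.+1 then (o k').+1 else p.+1).
Proof.
case=> zs os zos lt_pz sp; split => [[|k]|[|k]|[|k]] //= lt_kn; rewrite ?ltnS.
- exact: zs.
- exact: os.
- exact: zos.
Qed.

(* If [prev] is false, the first run counted starts after a 1 of [s]. *)
Lemma zero_runs_from_separated s prev n :
  n < zero_runs_from prev s ->
  exists z o, separated_zeros s n z o /\ (prev \/ exists2 p, p < z 0 & nth false s p).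
Proof.
elim: s prev n => [|x s IH] prev n //=; case: x => /=.
  rewrite andbF add0n => /IH [z [o [sep _]]].
  by exists (succn \o z), (succn \o o); split; [exact: separated_zeros_cons|right; exists 0].
rewrite andbT; case: prev => /=; last first.
  move=> /IH [z [o [sep [//|[p lt_pz sp]]]]].
  by exists (succn \o z), (succn \o o); split; [exact: separated_zeros_cons|right; exists p.+1].
case: n => [_|n]; first by exists (fun _ => 0), id; split; [split|left].
rewrite add1n ltnS => /IH [z [o [sep [//|[p lt_pz sp]]]]].
by eexists _, _; split; [exact: separated_zeros_cons_zero sep lt_pz sp|left].
Qed.

Lemma zero_runs_separated s n :
  n < zero_runs s -> exists z o, separated_zeros s n z o.
Proof. by case/zero_runs_from_separated=> z [o [sep _]]; exists z, o. Qed.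

(* The three remaining points of an occurrence of D4 (resp. P43) whose k-th
   point is the gap (i, z).  P43_hole1 and P43_hole3 only cover occurrences that
   cannot be moved onto the 1-entry (i, a) left, resp. (i, b) right, of the gap,
   and are stated relative to a, resp. b. *)
Definition D4_hole2 (f : nat -> nat -> bool) (i z : nat) : Prop :=
  exists ra ca rc cc rd cd,
    [/\ ra < i, i < rc, rc < rd, ca < z & z < cc /\ cc < cd] /\
    [/\ f ra ca, f rc cc & f rd cd].

Definition D4_hole3 (f : nat -> nat -> bool) (i z : nat) : Prop :=
  exists ra ca rb cb rd cd,
    [/\ ra < rb, rb < i, i < rd, ca < cb & cb < z /\ z < cd] /\
    [/\ f ra ca, f rb cb & f rd cd].

Definition P43_hole1 (f : nat -> nat -> bool) (i a : nat) : Prop :=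
  exists r2 c2 r3 c3 r4 c4,
    [/\ i < r2, r2 < r3, r3 < r4, a <= c2 & c2 < c3 /\ c3 < c4] /\
    [/\ f r2 c2, f r3 c3 & f r4 c4].

Definition P43_hole3 (f : nat -> nat -> bool) (i z b : nat) : Prop :=
  exists r1 c1 r2 c2 r4 c4,
    [/\ r1 < r2, r2 < i, i < r4, c2 < c1 & c1 < b /\ c2 < z /\ z < c4] /\
    [/\ f r1 c1, f r2 c2 & f r4 c4].

Lemma pigeonhole c N (C : 'I_c -> 'I_N -> Prop) :
  c < N -> (forall k, exists t, C t k) -> exists t (k k' : 'I_N), [/\ k < k', C t k & C t k'].
Proof.
move=> lt_cN /fin_all_exists [tau C_tau].
have /injectivePn [k [k' neq_kk' eq_tau]] : ~~ injectiveb tau.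
  by apply: contraTN lt_cN => /injectiveP/leq_card; rewrite !card_ord leqNgt.
case: (ltngtP k k') => [lt_kk'|lt_k'k|/val_inj eq_kk']; last by rewrite eq_kk' eqxx in neq_kk'.
- by exists (tau k), k, k'; split; rewrite // ?eq_tau.
- by exists (tau k), k', k; split; rewrite // ?eq_tau.
Qed.

Lemma interleaved_lt (z o : nat -> nat) N :
  (forall k, k < N -> z k < o k < z k.+1) -> forall k k', k < k' <= N -> o k < z k'.
Proof.
move=> sep k; elim=> [|k' IH] range; first by [].
have /andP [lt_zo lt_oz] := sep k' ltac:(lia).
case: (ltnP k k') => [lt_kk'|le_k'k]; last by have -> : k = k' by lia.
by have := IH ltac:(lia); lia.
Qed.

Section CriticalRow.
Variables (f : nat -> nat -> bool) (i : nat).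
Hypotheses (noD4 : ~ has_D4 f) (noP43 : ~ has_P43 f).

Lemma D4_through_gap a z b : f i a -> f i b -> a < z < b ->
  has_D4 (add_entry f i z) -> D4_hole2 f i z \/ D4_hole3 f i z.
Proof.
move=> fa fb /andP [az zb].
case=> a0 [a1 [a2 [a3 [b0 [b1 [b2 [b3 [[? ? ? ? [? ?]] [E0 E1 E2 E3]]]]]]]]].
case/orP: E0 => [E0|/andP [/eqP ? /eqP ?]]; case/orP: E1 => [E1|/andP [/eqP ? /eqP ?]];
case/orP: E2 => [E2|/andP [/eqP ? /eqP ?]]; case/orP: E3 => [E3|/andP [/eqP ? /eqP ?]];
try lia.
- by case: noD4; exists a0, a1, a2, a3, b0, b1, b2, b3.
- by case: noD4; exists a0, a1, a2, i, b0, b1, b2, b; split; split => //; lia.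
- by right; exists a0, b0, a1, b1, a3, b3; split; split => //; lia.
- by left; exists a0, b0, a2, b2, a3, b3; split; split => //; lia.
- by case: noD4; exists i, a1, a2, a3, a, b1, b2, b3; split; split => //; lia.
Qed.

Lemma P43_through_gap a z b : f i a -> f i b -> a < z < b ->
  has_P43 (add_entry f i z) -> P43_hole1 f i a \/ P43_hole3 f i z b.
Proof.
move=> fa fb /andP [az zb].
case=> a1 [a2 [a3 [a4 [c1 [c2 [c3 [c4 [[? ? ? ? [? [? ?]]] [E1 E2 E3 E4]]]]]]]]].
case/orP: E1 => [E1|/andP [/eqP ? /eqP ?]]; case/orP: E2 => [E2|/andP [/eqP ? /eqP ?]];
case/orP: E3 => [E3|/andP [/eqP ? /eqP ?]]; case/orP: E4 => [E4|/andP [/eqP ? /eqP ?]];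
try lia.
- by case: noP43; exists a1, a2, a3, a4, c1, c2, c3, c4.
- by case: noP43; exists a1, a2, a3, i, c1, c2, c3, b; split; split => //; lia.
- case: (ltnP b c4) => [lt_bc4|le_c4b].
    by case: noP43; exists a1, a2, i, a4, c1, c2, b, c4; split; split => //; lia.
  by right; exists a1, c1, a2, c2, a4, c4; split; split => //; lia.
- by case: noP43; exists a1, i, a3, a4, c1, a, c3, c4; split; split => //; lia.
- case: (ltnP c2 a) => [lt_c2a|le_ac2].
    by case: noP43; exists i, a2, a3, a4, a, c2, c3, c4; split; split => //; lia.
  by left; exists a2, c2, a3, c3, a4, c4; split; split => //; lia.
Qed.

Lemma D4_hole2_unique z z' b : z < b < z' -> f i b -> D4_hole2 f i z -> D4_hole2 f i z' -> False.
Proof.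
move=> /andP [? ?] fb [ra [ca [? [? [? [? [[? ? ? ? ?] [? ? ?]]]]]]]].
case=> [? [? [rc [cc [rd [cd [[? ? ? ? [? ?]] [? ? ?]]]]]]]].
by apply: noD4; exists ra, i, rc, rd, ca, b, cc, cd; split; split => //; lia.
Qed.

Lemma D4_hole3_unique z z' b : z < b < z' -> f i b -> D4_hole3 f i z -> D4_hole3 f i z' -> False.
Proof.
move=> /andP [? ?] fb [ra [ca [rb [cb [? [? [[? ? ? ? [? ?]] [? ? ?]]]]]]]].
case=> [? [? [? [? [rd [cd [[? ? ? ? [? ?]] [? ? ?]]]]]]]].
by apply: noD4; exists ra, rb, i, rd, ca, cb, b, cd; split; split => //; lia.
Qed.

Lemma P43_hole1_leftmost a a' : a < a' -> f i a -> P43_hole1 f i a' -> False.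
Proof.
move=> ? fa [r2 [c2 [r3 [c3 [r4 [c4 [[? ? ? ? [? ?]] [? ? ?]]]]]]]].
by apply: noD4; exists i, r2, r3, r4, a, c2, c3, c4; split; split => //; lia.
Qed.

Lemma P43_hole3_unique z z' b b' : z < b < z' -> f i b ->
  P43_hole3 f i z b -> P43_hole3 f i z' b' -> False.
Proof.
move=> /andP [? ?] fb [r1 [c1 [r2 [c2 [? [? [[? ? ? ? [? [? ?]]] [? ? ?]]]]]]]].
case=> [? [? [? [? [r4 [c4 [[? ? ? ? [? [? ?]]] [? ? ?]]]]]]]].
by apply: noP43; exists r1, r2, i, r4, c1, c2, b, c4; split; split => //; lia.
Qed.

Lemma gap_kind a0 a z b : a0 < a -> f i a0 -> f i a -> f i b -> a < z < b ->
  has_D4 (add_entry f i z) \/ has_P43 (add_entry f i z) ->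
  [\/ D4_hole2 f i z, D4_hole3 f i z | P43_hole3 f i z b].
Proof.
move=> lt_a0a fa0 fa fb gap.
case=> [/(D4_through_gap fa fb gap) [|]|/(P43_through_gap fa fb gap) [|]]; try by constructor.
by move/(P43_hole1_leftmost lt_a0a fa0).
Qed.

Lemma no_four_critical_gaps (z o : nat -> nat) :
  (forall k, k < 6 -> f i (o k)) -> (forall k, k < 6 -> z k < o k < z k.+1) ->
  ~ (forall k, 1 < k < 6 -> has_D4 (add_entry f i (z k)) \/ has_P43 (add_entry f i (z k))).
Proof.
move=> one sep crit.
pose C (t : 'I_3) (k : 'I_4) : Prop :=
  match val t with
  | 0 => D4_hole2 f i (z k.+2)
  | 1 => D4_hole3 f i (z k.+2)
  | _ => P43_hole3 f i (z k.+2) (o k.+2)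
  end.
(* The gaps z 2, ..., z 5 have the 1-entry o 0 left of their left neighbour,
   which rules out P43_hole1. *)
have kinds k : exists t, C t k.
  have lt_k4 := ltn_ord k.
  have sep1 := sep k.+1 ltac:(lia); have sep2 := sep k.+2 ltac:(lia).
  have lt_o0 : o 0 < o k.+1.
    by have := interleaved_lt sep (k := 0) (k' := k.+1) ltac:(lia); lia.
  have gap : o k.+1 < z k.+2 < o k.+2 by lia.
  have := gap_kind lt_o0 (one 0 isT) (one k.+1 ltac:(lia)) (one k.+2 ltac:(lia)) gap
    (crit k.+2 ltac:(lia)).
  case=> kind.
  - by exists (Ordinal (isT : 0 < 3)).
  - by exists (Ordinal (isT : 1 < 3)).
  - by exists (Ordinal (isT : 2 < 3)).
have [t [k [k' [lt_kk' Ck Ck']]]] := pigeonhole (isT : 3 < 4) kinds.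
have lt_k'4 := ltn_ord k'.
have lt_gaps : z k.+2 < o k.+2 < z k'.+2.
  have := sep k.+2 ltac:(lia).
  by have := interleaved_lt sep (k := k.+2) (k' := k'.+2) ltac:(lia); lia.
have fb := one k.+2 ltac:(lia).
case: t Ck Ck' => [[|[|[|t]]] lt_t3] //= Ck Ck'.
- exact: D4_hole2_unique lt_gaps fb Ck Ck'.
- exact: D4_hole3_unique lt_gaps fb Ck Ck'.
- exact: P43_hole3_unique lt_gaps fb Ck Ck'.
Qed.

End CriticalRow.

Lemma critical_add_entry m n (M : 'M[bool]_(m, n)) (i : 'I_m) (j : 'I_n) :
  critical (Av F_D4_P) M -> M i j = false ->
  has_D4 (add_entry (entry M) i j) \/ has_P43 (add_entry (entry M) i j).
Proof.
case=> _ crit /crit; rewrite AvP entry_set1 => not_Av.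
by apply: NNPP => /not_or_and.
Qed.

Lemma critical_row_complexity m n (M : 'M[bool]_(m, n)) (i : 'I_m) :
  critical (Av F_D4_P) M -> row_complexity M i <= 6.
Proof.
move=> critM; have [noD4 noP43] := (AvP M).1 critM.1.
rewrite leqNgt; apply/negP => /zero_runs_separated [z [o [zeros ones sep]]].
have row b d : nth d [seq M i j | j <- enum 'I_n] b = if b < n then entry M i b else d.
  by apply: nth_map_enum_ord => j; rewrite entryE.
apply: (no_four_critical_gaps noD4 noP43 (i := i) (z := z) (o := o)).
- by move=> k lt_k6; have := ones k lt_k6; rewrite row; case: ifP.
- by move=> k lt_k6; apply: sep.
- move=> k /andP [_ lt_k6].
  have := zeros k (ltnW lt_k6); rewrite row; case: ifPn => // lt_zn /negbTE Mz.
  have Mz' : M i (Ordinal lt_zn) = false by rewrite -entryE.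
  exact: critical_add_entry critM Mz'.
Qed.

Lemma critical_above (C : mclass) m n (M : 'M[bool]_(m, n)) :
  C m n M -> exists M', critical C M' /\ forall i j, M i j -> M' i j.
Proof.
have [k] := ubnP #|[set p : 'I_m * 'I_n | ~~ M p.1 p.2]|.
elim: k M => // k IH M lt_k CM.
have [critM|not_crit] := classic (critical C M); first by exists M.
have [i [j [Mij CM1]]] : exists i j, M i j = false /\ C m n (Defs.set1 M i j).
  apply: NNPP => none; apply: not_crit; split => // i j Mij CM1.
  by apply: none; exists i, j.
have le_M1 a b : M a b -> Defs.set1 M i j a b by rewrite mxE => ->.
have [|M' [critM' le_M']] := IH (Defs.set1 M i j) _ CM1.
  rewrite -ltnS (leq_trans _ lt_k) // ltnS; apply: proper_card; apply/properP; split.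
    by apply/subsetP => -[a b]; rewrite !inE; apply: contra; apply: le_M1.
  by exists (i, j); rewrite !inE /= ?Mij // mxE !eqxx orbT.
by exists M'; split => // a b /le_M1 /le_M'.
Qed.

Definition diagonals_mx n : 'M[bool]_((2 * n).+1, 2 * n + 6) :=
  \matrix_(i, j) [&& i %% 2 == 0 & [|| j == 0 :> nat, j + i == 2 * n | j + i == 2 * n + 5]].

Lemma entry_diagonals_mx n a b :
  entry (diagonals_mx n) a b =
  [&& a <= 2 * n, a %% 2 == 0 & [|| b == 0, b + a == 2 * n | b + a == 2 * n + 5]].
Proof.
apply/entryP/idP => [[i [j [<- <-]]]|diag_ab]; first by rewrite mxE; have := ltn_ord i; lia.
have lt_a : a < (2 * n).+1 by lia.
have lt_b : b < 2 * n + 6 by lia.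
by exists (Ordinal lt_a), (Ordinal lt_b); split => //; rewrite mxE /=; lia.
Qed.

(* Increasing sequences meet the first column and each anti-diagonal at most
   once, which excludes D4.  In an occurrence of P43 the second point must lie on
   the first column, the first and third on the inner anti-diagonal and the
   fourth on the outer one; then [c1 < c4] forces [a4 < a1 + 5], which is
   impossible for four distinct even rows. *)
Lemma diagonals_mx_Av n : Av F_D4_P (diagonals_mx n).
Proof.
apply/AvP; split.
  case=> a0 [a1 [a2 [a3 [b0 [b1 [b2 [b3 [[? ? ? ? [? ?]] [E0 E1 E2 E3]]]]]]]]].
  by rewrite !entry_diagonals_mx in E0 E1 E2 E3; lia.
case=> a1 [a2 [a3 [a4 [c1 [c2 [c3 [c4 [[? ? ? ? [? [? ?]]] [E1 E2 E3 E4]]]]]]]]].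
by rewrite !entry_diagonals_mx in E1 E2 E3 E4; lia.
Qed.

Lemma diagonals_force_zeros n (f : nat -> nat -> bool) :
  (forall a b, entry (diagonals_mx n) a b -> f a b) -> ~ has_P43 f ->
  forall t, t.+1 < n -> f (2 * t) 0 && ~~ f (2 * t).+1 0.
Proof.
move=> le_f noP43 t lt_tn.
rewrite le_f ?entry_diagonals_mx /=; last lia.
apply/negP => f1; apply: noP43.
exists (2 * t), (2 * t).+1, (2 * t + 2), (2 * t + 4).
exists (2 * n - 2 * t), 0, (2 * n - 2 * t - 2), (2 * n - 2 * t + 1).
by split; [split; lia|split => //; apply: le_f; rewrite entry_diagonals_mx; lia].
Qed.

Lemma not_column_bounded : ~ column_bounded (Av F_D4_P).
Proof.
case=> B bounded.
have [M [critM le_M]] := critical_above (@diagonals_mx_Av B.+2).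
have [_ noP43] := (AvP M).1 critM.1.
have lt_0 : 0 < 2 * B.+2 + 6 by lia.
have := bounded _ _ M critM (Ordinal lt_0); apply/negP; rewrite -ltnNge.
apply: (zero_runs_from_alternating _ (n := B.+1)) => t lt_tB.
have col a d : nth d [seq M i (Ordinal lt_0) | i <- enum 'I_(2 * B.+2).+1] a =
               if a < (2 * B.+2).+1 then entry M a 0 else d.
  by apply: (nth_map_enum_ord (h := fun a => entry M a 0)) => i; apply: (entryE M i (Ordinal lt_0)).
rewrite !col !ifT; try lia.
exact (diagonals_force_zeros (entry_mono le_M) noP43 lt_tB).
Qed.

Theorem proposition4p1 :
  row_bounded (Av F_D4_P) /\ ~ column_bounded (Av F_D4_P).
Proof.
split; last exact: not_column_bounded.
by exists 6 => m n M critM i; apply: critical_row_complexity.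
Qed.
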